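(* Under Assumption 1, let $(x_t,y_t)$ be generated by SBFW with step sizes satisfying $\delta_t\le\min\{\frac{2}{3\mu_g},\frac{\mu_g}{2(1+\sigma_g^2)L_g^2}\}$ and $\eta_t\in[0,1]$. Then for all $t\ge2$, $$\mathbb E_t\|y_t-y^*(x_t)\|^2\le\Big(1-\frac{\delta_t\mu_g}{2}\Big)\|y_{t-1}-y^*(x_{t-1})\|^2+\frac{2\eta_{t-1}^2}{\delta_t\mu_g}\Big(\frac{C_{xy}}{\mu_g}\Big)^2D^2+4\delta_t^2\sigma_g^2.$$
   Context: Setting. $\mathcal X\subset\mathbb R^m$ is nonempty, convex and compact, with diameter $D=\max_{x,x'\in\mathcal X}\|x-x'\|$. $\theta,\xi$ are independent random variables; $f(x,y;\theta)$ and $g(x,y;\xi)$ map $\mathbb R^m\times\mathbb R^n\to\mathbb R$, with $g(\cdot,\cdot;\xi)$ twice continuously differentiable. Put $F(x,y)=\mathbb E_\theta f(x,y;\theta)$ and $G(x,y)=\mathbb E_\xi g(x,y;\xi)$; derivatives of $F,G$ are expectations of those of $f,g$. Let $y^*(x)=\arg\min_{y\in\mathbb R^n}G(x,y)$. Assumption 1. (i) $\mathbb E\|\nabla_xF(x,y)-\nabla_xf(x,y;\theta)\|^2\le\sigma_x^2$, $\mathbb E\|\nabla_yF(x,y)-\nabla_yf(x,y;\theta)\|^2\le\sigma_y^2$, $\mathbb E\|\nabla^2_{xy}G(x,y)-\nabla^2_{xy}g(x,y;\xi)\|^2\le\sigma_{xy}^2$, $\mathbb E\|\nabla_yG(x,y)-\nabla_yg(x,y;\xi)\|^2\le\sigma_g^2$.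 (ii) For each $x\in\mathcal X$, the maps $y\mapsto\nabla_xF,\nabla_yF,\nabla_yG,\nabla^2_{xy}G,\nabla^2_{yy}G$ are Lipschitz with constants $L_{f_x},L_{f_y},L_g,L_{g_{xy}},L_{g_{yy}}$ respectively. (iii) For each $y$, the maps $x\mapsto\nabla_yF,\nabla^2_{xy}G,\nabla^2_{yy}G$ are Lipschitz with constants $L_{f_y},L_{g_{xy}},L_{g_{yy}}$. (iv) For all $x\in\mathcal X$, $y\in\mathbb R^n$: $\mathbb E\|\nabla_yf(x,y;\theta)\|\le C_y$, $\mathbb E\|\nabla^2_{xy}g(x,y;\xi)\|\le C_{xy}$. (v) $G(x,\cdot)$ is $\mu_g$-strongly convex for every $x\in\mathcal X$. Algorithm SBFW (relevant part). Fresh samples $\xi_t$ are drawn at iteration $t$ independently of the past. $x_1\in\mathcal X$, $y_1\in\mathbb R^n$; for $t\ge2$, $y_t=y_{t-1}-\delta_t\nabla_yg(x_{t-1},y_{t-1};\xi_t)$; for $t\ge1$, $d_t$ is some $\mathbb R^m$-valued direction, $s_t\in\arg\min_{s\in\mathcal X}\langle s,d_t\rangle$ and $x_{t+1}=(1-\eta_t)x_t+\eta_ts_t$ (so $x_t\in\mathcal X$). $\mathcal F_t$ is the σ-field of all randomness drawn before iteration $t$'s fresh samples (so $x_{t-1},y_{t-1},x_t$ are $\mathcal F_t$-measurable), and $\mathbb E_t=\mathbb E[\cdot\mid\mathcal F_t]$. *)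

From HB Require Import structures.
From mathcomp Require Import all_boot all_order all_algebra.
From mathcomp Require Import all_classical all_reals all_analysis.
Set Implicit Arguments. Unset Strict Implicit. Unset Printing Implicit Defensive.
Import Order.TTheory GRing.Theory Num.Theory.
Import numFieldNormedType.Exports.
Local Open Scope classical_set_scope.
Local Open Scope ring_scope.

Section Defs.
Context {R : realType}.

Definition dotv {k : nat} (u v : 'rV[R]_k) : R := \sum_(i < k) u 0 i * v 0 i.
Definition enorm {k : nat} (v : 'rV[R]_k) : R := Num.sqrt (dotv v v).

Definition opnorm {p q : nat} (A : 'M[R]_(p, q)) : R :=
  sup [set enorm (u *m A) | u in [set u : 'rV[R]_p | enorm u <= 1]].

Definition convex_setv {k : nat} (X : set 'rV[R]_k) : Prop :=
  forall a b (l : R), X a -> X b -> 0 <= l <= 1 -> X ((1 - l) *: a + l *: b).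

Definition is_diameter {k : nat} (X : set 'rV[R]_k) (D : R) : Prop :=
  (forall a b, X a -> X b -> enorm (a - b) <= D) /\
  (exists a b, X a /\ X b /\ enorm (a - b) = D).

Definition ex_dir {m n : nat} (i : 'I_m) : 'rV[R]_m * 'rV[R]_n := (delta_mx 0 i, 0).
Definition ey_dir {m n : nat} (j : 'I_n) : 'rV[R]_m * 'rV[R]_n := (0, delta_mx 0 j).

Definition grad_x {m n : nat} (h : 'rV[R]_m * 'rV[R]_n -> R) p : 'rV[R]_m :=
  \row_i derive h p (@ex_dir m n i).
Definition grad_y {m n : nat} (h : 'rV[R]_m * 'rV[R]_n -> R) p : 'rV[R]_n :=
  \row_j derive h p (@ey_dir m n j).
Definition hess_xy {m n : nat} (h : 'rV[R]_m * 'rV[R]_n -> R) p : 'M[R]_(m, n) :=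
  \matrix_(i, j) derive (fun q => derive h q (@ey_dir m n j)) p (@ex_dir m n i).
Definition hess_yy {m n : nat} (h : 'rV[R]_m * 'rV[R]_n -> R) p : 'M[R]_(n, n) :=
  \matrix_(i, j) derive (fun q => derive h q (@ey_dir m n j)) p (@ey_dir m n i).

Definition C2 {V : normedModType R} (h : V -> R) : Prop :=
  (forall p, differentiable h p) /\
  (forall v p, differentiable (fun q => derive h q v) p) /\
  (forall v w, continuous (fun q => derive (fun q' => derive h q' v) q w)).

Definition Ex {d} {T : measurableType d} (P : probability T R) (Y : T -> R) : R :=
  fine (\int[P]_w (Y w)%:E)%E.

End Defs.

(* One y-update is a stochastic gradient step on the mu_g-strongly convex function
   G(x_{t-1}, .).  Since the stochastic gradient is unbiased, the mean squared distance of
   y_t to y*(x_{t-1}) is that of the exact gradient step, which strong monotonicity and the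
   L_g-Lipschitz gradient contract by 1 - 3 delta mu_g / 2, plus the variance
   delta^2 sigma_g^2.  The target has moved to y*(x_t): strong monotonicity of grad_y G at
   x_t and the mean value theorem in x give
   mu_g |y*(x) - y*(x')|^2 <= C_xy |x - x'| |y*(x) - y*(x')|, so y* is
   (C_xy/mu_g)-Lipschitz, and the Frank-Wolfe step moves x by at most eta_{t-1} D.
   Young's inequality with weights 1/(1 - delta mu_g/2) and 2/(delta mu_g) combines the
   two errors. *)

From HB Require Import structures.
From mathcomp Require Import all_boot all_order all_algebra.
From mathcomp Require Import all_classical all_reals all_analysis.
From mathcomp Require Import ring lra.
Import Order.TTheory GRing.Theory Num.Theory.
Import numFieldNormedType.Exports.
Local Open Scope classical_set_scope.
Local Open Scope ring_scope.
Set Implicit Arguments. Unset Strict Implicit.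

Section InnerProduct.
Variables (R : realType) (k : nat).
Implicit Types (u v w : 'rV[R]_k) (c : R).

Lemma dotvC u v : dotv u v = dotv v u.
Proof. by apply: eq_bigr => i _; rewrite mulrC. Qed.

Lemma dotvDl u v w : dotv (u + v) w = dotv u w + dotv v w.
Proof. by rewrite /dotv -big_split; apply: eq_bigr => i _; rewrite mxE mulrDl. Qed.

Lemma dotvZl c u w : dotv (c *: u) w = c * dotv u w.
Proof. by rewrite /dotv mulr_sumr; apply: eq_bigr => i _; rewrite mxE mulrA. Qed.

Lemma dotvNl u w : dotv (- u) w = - dotv u w.
Proof. by rewrite -scaleN1r dotvZl mulN1r. Qed.

Lemma dotvBl u v w : dotv (u - v) w = dotv u w - dotv v w.
Proof. by rewrite dotvDl dotvNl. Qed.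

Lemma dotvDr u v w : dotv w (u + v) = dotv w u + dotv w v.
Proof. by rewrite dotvC dotvDl !(dotvC w). Qed.

Lemma dotvZr c u w : dotv w (c *: u) = c * dotv w u.
Proof. by rewrite dotvC dotvZl dotvC. Qed.

Lemma dotvNr u w : dotv w (- u) = - dotv w u.
Proof. by rewrite dotvC dotvNl dotvC. Qed.

Lemma dotvBr u v w : dotv w (u - v) = dotv w u - dotv w v.
Proof. by rewrite dotvC dotvBl !(dotvC w). Qed.

Lemma dotv0l w : dotv 0 w = 0.
Proof. by rewrite /dotv big1 // => i _; rewrite mxE mul0r. Qed.

Lemma dotvv_ge0 v : 0 <= dotv v v.
Proof. by apply: sumr_ge0 => i _; rewrite -expr2 sqr_ge0. Qed.

Lemma enorm_ge0 v : 0 <= enorm v.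
Proof. exact: sqrtr_ge0. Qed.

Lemma enorm0 : enorm (0 : 'rV[R]_k) = 0.
Proof. by rewrite /enorm dotv0l sqrtr0. Qed.

Lemma enorm_sqr v : enorm v ^+ 2 = dotv v v.
Proof. by rewrite sqr_sqrtr // dotvv_ge0. Qed.

Lemma enormZ c v : enorm (c *: v) = `|c| * enorm v.
Proof. by rewrite /enorm dotvZl dotvZr mulrA sqrtrM ?sqr_ge0 // -expr2 sqrtr_sqr. Qed.

Lemma enormN v : enorm (- v) = enorm v.
Proof. by rewrite -scaleN1r enormZ normrN normr1 mul1r. Qed.

Lemma enormBC u v : enorm (u - v) = enorm (v - u).
Proof. by rewrite -enormN opprB. Qed.

Lemma enorm_eq0 v : enorm v = 0 -> v = 0.
Proof.
move=> v0; have /eqP : dotv v v = 0 by rewrite -enorm_sqr v0 expr0n.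
rewrite psumr_eq0 => [/allP vv0|i _]; last by rewrite -expr2 sqr_ge0.
apply/rowP => j; have := vv0 j (mem_index_enum j).
by rewrite -expr2 sqrf_eq0 mxE => /eqP.
Qed.

Lemma enormDZ_sqr u v c :
  enorm (u + c *: v) ^+ 2 = enorm u ^+ 2 + 2 * c * dotv u v + c ^+ 2 * enorm v ^+ 2.
Proof.
rewrite !enorm_sqr dotvDl !dotvDr !dotvZl !dotvZr (dotvC v u).
by rewrite expr2; ring.
Qed.

(* Cauchy-Schwarz, from the discriminant of t |-> |u - t v|^2. *)
Lemma dotv_le u v : dotv u v <= enorm u * enorm v.
Proof.
set A := dotv u u; set B := dotv u v; set C := dotv v v.
have quad t : 0 <= A - 2 * t * B + t ^+ 2 * C.
  have := dotvv_ge0 (u - t *: v).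
  by rewrite dotvBl !dotvBr !dotvZl !dotvZr (dotvC v u) -/A -/B -/C; nra.
have discr : B ^+ 2 <= A * C.
  have [C_gt0|C_le0] := ltrP 0 C.
    have := quad (B / C).
    have -> : A - 2 * (B / C) * B + (B / C) ^+ 2 * C = (A * C - B ^+ 2) / C.
      by field; rewrite gt_eqF.
    by rewrite pmulr_lge0 ?invr_gt0 // subr_ge0.
  have C0 : C = 0 by apply/eqP; rewrite eq_le C_le0 dotvv_ge0.
  have B0 : B = 0.
    have [//|B_neq0] := eqVneq B 0; have := quad ((A + 1) / (2 * B)).
    rewrite C0 mulr0 addr0 (_ : 2 * ((A + 1) / (2 * B)) * B = A + 1); first lra.
    by field.
  by rewrite B0 C0 expr0n mulr0.
have [B_le0|B_gt0] := lerP B 0; first by rewrite (le_trans B_le0) ?mulr_ge0 ?enorm_ge0.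
rewrite -(ger0_norm (ltW B_gt0)) -sqrtr_sqr /enorm -sqrtrM ?dotvv_ge0 //.
by rewrite ler_sqrt // mulr_ge0 // dotvv_ge0.
Qed.

Lemma norm_dotv_le u v : `|dotv u v| <= enorm u * enorm v.
Proof.
have [_|_] := ler0P (dotv u v); last exact: dotv_le.
by rewrite -dotvNl -(enormN u) dotv_le.
Qed.

Lemma enormD_sqr_le u v b : 0 < b < 1 ->
  enorm (u + v) ^+ 2 <= (1 - b)^-1 * enorm u ^+ 2 + b^-1 * enorm v ^+ 2.
Proof.
case/andP=> b_gt0 b_lt1; rewrite -subr_ge0.
have := dotvv_ge0 (b *: u - (1 - b) *: v).
rewrite dotvBl !dotvBr !dotvZl !dotvZr (dotvC v u) => h.
rewrite !enorm_sqr dotvDl !dotvDr (dotvC v u).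
set A := dotv u u in h *; set B := dotv u v in h *; set C := dotv v v in h *.
have -> : (1 - b)^-1 * A + b^-1 * C - (A + B + (B + C))
    = (b * (b * A) - b * ((1 - b) * B) - ((1 - b) * (b * B) - (1 - b) * ((1 - b) * C)))
      / (b * (1 - b)).
  by field; rewrite ?gt_eqF ?subr_gt0.
by rewrite divr_ge0 // mulr_ge0 // ltW // subr_gt0.
Qed.

Lemma enorm_grad_step_sqr_le u v mu L t : 0 < t ->
  mu * enorm u ^+ 2 <= dotv v u -> enorm v <= L * enorm u -> t * L ^+ 2 <= mu / 2 ->
  enorm (u - t *: v) ^+ 2 <= (1 - 3 * (t * mu / 2)) * enorm u ^+ 2.
Proof.
move=> t_gt0 mono lip tL.
have lip2 : enorm v ^+ 2 <= L ^+ 2 * enorm u ^+ 2.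
  by rewrite -exprMn lerXn2r ?nnegrE ?enorm_ge0 // (le_trans (enorm_ge0 _) lip).
rewrite -scaleNr enormDZ_sqr (dotvC u) sqrrN.
have := ler_wpM2l (ltW t_gt0) mono; have := ler_wpM2l (sqr_ge0 t) lip2.
have := ler_wpM2r (sqr_ge0 (enorm u)) (ler_wpM2l (ltW t_gt0) tL); nra.
Qed.

End InnerProduct.

Section OperatorNorm.
Variables (R : realType) (p q : nat).
Implicit Types (A : 'M[R]_(p, q)) (u : 'rV[R]_p).

Lemma enorm_mulmx_le_opnorm A u : enorm u <= 1 -> enorm (u *m A) <= opnorm A.
Proof.
move=> u_le1; apply: ub_le_sup; last by exists u.
exists (Num.sqrt (\sum_j dotv (\row_i A i j) (\row_i A i j))).
move=> _ [v /= v_le1 <-]; rewrite /enorm ler_sqrt; last first.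
  by apply: sumr_ge0 => j _; exact: dotvv_ge0.
apply: ler_sum => j _.
have -> : (v *m A) 0 j = dotv v (\row_i A i j).
  by rewrite mxE; apply: eq_bigr => i _; rewrite mxE.
rewrite -expr2 -real_normK ?num_real // -enorm_sqr lerXn2r ?nnegrE ?enorm_ge0 //.
by rewrite (le_trans (norm_dotv_le _ _)) // ler_piMl ?enorm_ge0.
Qed.

Lemma opnorm_ge0 A : 0 <= opnorm A.
Proof. by rewrite (le_trans (enorm_ge0 (0 *m A))) ?enorm_mulmx_le_opnorm ?enorm0. Qed.

Lemma enorm_mulmx_le A u : enorm (u *m A) <= opnorm A * enorm u.
Proof.
have [u0|u_neq0] := eqVneq (enorm u) 0.
  by rewrite (enorm_eq0 u0) mul0mx !enorm0 mulr0.
have u_gt0 : 0 < enorm u by rewrite lt_def u_neq0 enorm_ge0.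
have := @enorm_mulmx_le_opnorm A ((enorm u)^-1 *: u).
rewrite -scalemxAl !enormZ ger0_norm ?invr_ge0 ?enorm_ge0 // mulVf // lexx.
by move=> /(_ isT); rewrite mulrC ler_pdivrMr.
Qed.

Lemma dotv_mulmx A u (w : 'rV[R]_q) :
  dotv (u *m A) w = \sum_(j < q) \sum_(i < p) u 0 i * w 0 j * A i j.
Proof.
by apply: eq_bigr => j _; rewrite mxE mulr_suml; apply: eq_bigr => i _; rewrite mulrAC.
Qed.

End OperatorNorm.

Section RealExpectation.
Variables (R : realType) (d : measure_display) (T : measurableType d).
Variable P : probability T R.
Implicit Types (f h : T -> R) (c : R).

Definition rintegrable f := P.-integrable setT (fun x => (f x)%:E).

Lemma integralEx f : rintegrable f -> (\int[P]_x (f x)%:E = (Ex P f)%:E)%E.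
Proof. by move=> f_int; rewrite /Ex fineK // integrable_fin_num. Qed.

Lemma rintegrableD f h : rintegrable f -> rintegrable h -> rintegrable (f \+ h).
Proof. exact: integrableD. Qed.

Lemma rintegrableZ c f : rintegrable f -> rintegrable (fun x => c * f x).
Proof. exact: integrableZl. Qed.

Lemma rintegrableB f h : rintegrable f -> rintegrable h -> rintegrable (f \- h).
Proof. exact: integrableB. Qed.

Lemma rintegrable_cst c : rintegrable (cst c).
Proof. exact: finite_measure_integrable_cst. Qed.

Lemma rintegrable_norm f : rintegrable f -> rintegrable (fun x => `|f x|).
Proof. exact: integrable_abse. Qed.

Lemma rintegrable_sum n (F : 'I_n -> T -> R) : (forall i, rintegrable (F i)) ->
  rintegrable (fun x => \sum_(i < n) F i x).
Proof.
move=> F_int; rewrite /rintegrable; under eq_fun do rewrite -sumEFin.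
by apply: integrable_sum => // i _; exact: F_int.
Qed.

Lemma rintegrable_ge0_bounded f c : measurable_fun setT f -> (forall x, 0 <= f x) ->
  (\int[P]_x (f x)%:E <= c%:E)%E -> rintegrable f.
Proof.
move=> mf f_ge0 f_le; apply/integrableP; split; first exact/measurable_realfun.measurable_EFinP.
under eq_integral do rewrite gee0_abs ?lee_fin //.
exact: le_lt_trans f_le (ltry _).
Qed.

Lemma ExD f h : rintegrable f -> rintegrable h -> Ex P (f \+ h) = Ex P f + Ex P h.
Proof.
move=> f_int h_int; apply/EFin_inj; rewrite -integralEx; last exact: rintegrableD.
by rewrite EFinD -!integralEx // -integralD.
Qed.

Lemma ExZ c f : rintegrable f -> Ex P (fun x => c * f x) = c * Ex P f.
Proof.
move=> f_int; apply/EFin_inj; rewrite -integralEx; last exact: rintegrableZ.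
by rewrite EFinM -integralEx // -integralZl.
Qed.

Lemma ExB f h : rintegrable f -> rintegrable h -> Ex P (f \- h) = Ex P f - Ex P h.
Proof.
move=> f_int h_int; apply/EFin_inj; rewrite -integralEx; last exact: rintegrableB.
by rewrite EFinB -!integralEx // -integralB.
Qed.

Lemma Ex_cst c : Ex P (cst c) = c.
Proof.
rewrite /Ex (_ : (fun _ => _) = cst c%:E) //.
by rewrite integral_cst // [X in (_ * X)%E]probability_setT mule1.
Qed.

Lemma Ex_sum n (F : 'I_n -> T -> R) : (forall i, rintegrable (F i)) ->
  Ex P (fun x => \sum_(i < n) F i x) = \sum_(i < n) Ex P (F i).
Proof.
move=> F_int; apply/EFin_inj; rewrite -integralEx; last exact: rintegrable_sum.
rewrite -sumEFin; under eq_integral do rewrite -sumEFin.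
by rewrite integral_sum //; apply: eq_bigr => i _; exact: integralEx.
Qed.

Lemma le_Ex f h : rintegrable f -> rintegrable h -> (forall x, f x <= h x) ->
  Ex P f <= Ex P h.
Proof.
move=> f_int h_int fh; rewrite -lee_fin -!integralEx //.
by apply: le_integral => // x _; rewrite lee_fin.
Qed.

(* No measurability is needed: for nonnegative functions the integral is a sup over simple
   functions below the integrand. *)
Lemma le_integral_nonneg (f h : T -> \bar R) : (forall x, 0 <= f x)%E ->
  (forall x, f x <= h x)%E -> (\int[P]_x f x <= \int[P]_x h x)%E.
Proof.
move=> f_ge0 fh; have h_ge0 x : (0 <= h x)%E by exact: le_trans (fh x).
rewrite !ge0_integralE //; apply: le_ereal_sup => _ [s /= sf <-].
by exists s => //= x; apply: le_trans (sf x) _; rewrite /patch; case: ifP.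
Qed.

Lemma integral_le_Ex f h : (forall x, 0 <= f x <= h x) -> rintegrable h ->
  (\int[P]_x (f x)%:E <= (Ex P h)%:E)%E.
Proof.
move=> fh h_int; rewrite -integralEx //.
by apply: le_integral_nonneg => x; rewrite lee_fin; case/andP: (fh x).
Qed.

(* The bound on [h] is an integral bound because [h] need not be measurable. *)
Lemma Ex_le_scale_integral f h (k C : R) : rintegrable f -> 0 <= k ->
  (forall x, 0 <= h x) -> (forall x, `|f x| <= k * h x) ->
  (\int[P]_x (h x)%:E <= C%:E)%E -> Ex P f <= k * C.
Proof.
move=> f_int k_ge0 h_ge0 fh h_le.
have absf_int := rintegrable_norm f_int.
apply: le_trans (le_Ex f_int absf_int (fun x => ler_norm (f x))) _.
have [k0|k_neq0] := eqVneq k 0.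
  rewrite k0 mul0r (_ : (fun x => _) = cst 0) ?Ex_cst //.
  by apply/funext => x; apply/eqP; rewrite -normr_le0 normr_id -(mul0r (h x)) -k0.
have k_gt0 : 0 < k by rewrite lt_def k_neq0.
rewrite -ler_pdivrMl // -ExZ // -lee_fin -integralEx; last exact: rintegrableZ.
apply: le_trans h_le; apply: le_integral_nonneg => x; rewrite lee_fin.
  by rewrite mulr_ge0 ?invr_ge0 // ltW.
by rewrite ler_pdivrMl.
Qed.

Lemma dotv_mulmx_mean_le p q (A : T -> 'M[R]_(p, q)) (M : 'M[R]_(p, q))
    (u : 'rV[R]_p) (w : 'rV[R]_q) C :
  (forall i j, rintegrable (fun x => A x i j)) ->
  (forall i j, M i j = Ex P (fun x => A x i j)) ->
  (\int[P]_x (opnorm (A x))%:E <= C%:E)%E ->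
  dotv (u *m M) w <= C * enorm u * enorm w.
Proof.
move=> A_int A_mean A_le; pose h x := dotv (u *m A x) w.
have hE : h = fun x => \sum_(j < q) \sum_(i < p) u 0 i * w 0 j * A x i j.
  by apply/funext => x; exact: dotv_mulmx.
have sum_int j : rintegrable (fun x => \sum_(i < p) u 0 i * w 0 j * A x i j).
  by apply: rintegrable_sum => i; exact: rintegrableZ.
have h_int : rintegrable h by rewrite hE; exact: rintegrable_sum.
have -> : dotv (u *m M) w = Ex P h.
  rewrite hE dotv_mulmx Ex_sum //; apply: eq_bigr => j _.
  rewrite Ex_sum => [|i]; last exact: rintegrableZ.
  by apply: eq_bigr => i _; rewrite ExZ ?A_mean.
rewrite -mulrA mulrC; apply: Ex_le_scale_integral h_int _ _ _ A_le => [|x|x].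
- by rewrite mulr_ge0 ?enorm_ge0.
- exact: opnorm_ge0.
rewrite (le_trans (norm_dotv_le _ _)) // mulrAC ler_wpM2r ?enorm_ge0 //.
by rewrite mulrC enorm_mulmx_le.
Qed.

(* Bias-variance decomposition of a centered perturbation, combined with Young's inequality. *)
Lemma integral_enorm_sqr_centered_le k (e : T -> 'rV[R]_k) (a b : 'rV[R]_k) t s beta :
  (forall j, rintegrable (fun x => e x 0 j)) -> (forall j, Ex P (fun x => e x 0 j) = 0) ->
  (\int[P]_x (enorm (e x) ^+ 2)%:E <= s%:E)%E -> 0 < beta < 1 ->
  (\int[P]_x (enorm (a + t *: e x + b) ^+ 2)%:E <=
    ((1 - beta)^-1 * (enorm a ^+ 2 + t ^+ 2 * s) + beta^-1 * enorm b ^+ 2)%:E)%E.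
Proof.
move=> e_int e_mean var_le beta01.
pose dot x := dotv a (e x); pose sq x := enorm (e x) ^+ 2.
have dot_int : rintegrable dot by apply: rintegrable_sum => j; exact: rintegrableZ.
have dot_mean : Ex P dot = 0.
  rewrite /dot /dotv Ex_sum => [|j]; last exact: rintegrableZ.
  by rewrite big1 // => j _; rewrite ExZ // e_mean mulr0.
have sq_int : rintegrable sq.
  apply: rintegrable_ge0_bounded var_le => [|x]; last exact: sqr_ge0.
  under eq_fun do rewrite enorm_sqr.
  apply: measurable_sum => j; apply: measurable_realfun.measurable_funM;
    exact/measurable_realfun.measurable_EFinP/(measurable_int _ (e_int j)).
have sq_le : Ex P sq <= s by rewrite -lee_fin -integralEx.
pose a0 := (1 - beta)^-1 * enorm a ^+ 2 + beta^-1 * enorm b ^+ 2.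
pose Phi x := a0 + ((1 - beta)^-1 * (2 * t) * dot x + (1 - beta)^-1 * t ^+ 2 * sq x).
have Phi_int : rintegrable Phi.
  by apply: rintegrableD; [exact: rintegrable_cst | apply: rintegrableD; exact: rintegrableZ].
apply: le_trans (integral_le_Ex _ Phi_int) _.
  move=> x; rewrite sqr_ge0 (le_trans (enormD_sqr_le _ _ beta01)) //.
  by rewrite /Phi /a0 enormDZ_sqr /dot /sq; lra.
rewrite lee_fin /Phi ExD ?ExD ?ExZ ?Ex_cst ?dot_mean //;
  try by [exact: rintegrable_cst | apply: rintegrableD; exact: rintegrableZ | exact: rintegrableZ].
have inv_ge0 : 0 <= (1 - beta)^-1 by rewrite invr_ge0; case/andP: beta01; lra.
rewrite /a0; have := ler_wpM2l inv_ge0 (ler_wpM2l (sqr_ge0 t) sq_le); lra.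
Qed.

Lemma integral_sgd_step_le k (gx : T -> 'rV[R]_k) (g y y0 z : 'rV[R]_k) t s beta :
  (forall j, rintegrable (fun x => gx x 0 j)) -> (forall j, g 0 j = Ex P (fun x => gx x 0 j)) ->
  (\int[P]_x (enorm (g - gx x) ^+ 2)%:E <= s%:E)%E -> 0 < beta < 1 ->
  (\int[P]_x (enorm (y - t *: gx x - z) ^+ 2)%:E <=
    ((1 - beta)^-1 * (enorm (y - t *: g - y0) ^+ 2 + t ^+ 2 * s)
     + beta^-1 * enorm (y0 - z) ^+ 2)%:E)%E.
Proof.
move=> gx_int g_mean var_le beta01.
have eb j : rintegrable (fun x => (g - gx x) 0 j).
  by under eq_fun do rewrite 2!mxE; exact: (rintegrableB (rintegrable_cst _) (gx_int j)).
under eq_integral => x _.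
  rewrite (_ : y - _ - z = y - t *: g - y0 + t *: (g - gx x) + (y0 - z)).
    over.
  by apply/rowP => j; rewrite !mxE; ring.
apply: integral_enorm_sqr_centered_le => // j.
under eq_fun do rewrite 2!mxE.
by rewrite g_mean (ExB (rintegrable_cst _) (gx_int j)) Ex_cst subrr.
Qed.

End RealExpectation.

Lemma lim_le_of_right (R : realType) (f : R -> R) (K : R) : cvg (f h @[h --> 0^']) ->
  (forall e, 0 < e -> \forall h \near 0^'+, f h <= K + e) -> lim (f h @[h --> 0^']) <= K.
Proof.
move=> cvf f_le; rewrite (cvg_at_rightE f) //.
have cvf_right : cvg (f h @[h --> 0^'+]).
  apply/cvg_ex; exists (lim (f h @[h --> 0^'])).
  move=> A /cvf /nbhs_ballP [_ /posnumP[r] rA].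
  by exists r%:num => //= h h_r /gt_eqF/negbT/rA; exact.
by apply/ler_addgt0Pr => e e_gt0; apply: limr_le; last exact: f_le.
Qed.

Section PartialDerivatives.
Variables (R : realType) (m n : nat).
Local Notation V := ('rV[R]_m * 'rV[R]_n)%type.
Implicit Types (G : V -> R) (p : V) (x : 'rV[R]_m) (a b y : 'rV[R]_n) (mu : R).

Lemma pair_sum_dir (u : 'rV[R]_m) (w : 'rV[R]_n) :
  (u, w) = \sum_(i < m) u 0 i *: (@ex_dir R m n i) + \sum_(j < n) w 0 j *: (@ey_dir R m n j).
Proof.
have sum1 k (F : 'I_k -> V) : (\sum_(i < k) F i).1 = \sum_(i < k) (F i).1.
  exact: (big_morph fst).
have sum2 k (F : 'I_k -> V) : (\sum_(i < k) F i).2 = \sum_(i < k) (F i).2.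
  exact: (big_morph snd).
congr pair; rewrite /= ?sum1 ?sum2 /=.
  by rewrite [X in _ + X]big1 ?addr0 -?row_sum_delta // => j _; rewrite scaler0.
by rewrite [X in X + _]big1 ?add0r -?row_sum_delta // => i _; rewrite scaler0.
Qed.

Lemma derive_grad G p (u : 'rV[R]_m) (w : 'rV[R]_n) : differentiable G p ->
  derive G p (u, w) = dotv (grad_x G p) u + dotv (grad_y G p) w.
Proof.
move=> dG; rewrite deriveE // pair_sum_dir linearD !linear_sum /=.
by congr (_ + _); apply: eq_bigr => i _; rewrite linearZ /= -deriveE // mxE mulrC.
Qed.

Lemma dotv_mulmx_hess_xy G p (u : 'rV[R]_m) (w : 'rV[R]_n) :
  (forall j, differentiable (fun q => derive G q (@ey_dir R m n j)) p) ->
  dotv (u *m hess_xy G p) w =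
    \sum_(j < n) w 0 j * derive (fun q => derive G q (@ey_dir R m n j)) p (u, 0).
Proof.
move=> dG; apply: eq_bigr => j _.
rewrite derive_grad // (dotvC _ 0) dotv0l addr0 mxE mulrC; congr (_ * _).
by apply: eq_bigr => i _; rewrite !mxE mulrC.
Qed.

Lemma is_derive_line G p (v : V) (t : R) : differentiable G (p + t *: v) ->
  is_derive t 1 (fun s : R => G (p + s *: v)) (derive G (p + t *: v) v).
Proof.
move=> dG.
have quotE : (fun h : R => h^-1 *: (((fun s : R => G (p + s *: v)) \o shift t) (h *: 1)
                 - G (p + t *: v))) =
             (fun h : R => h^-1 *: ((G \o shift (p + t *: v)) (h *: v) - G (p + t *: v))).
  apply/funext => h; rewrite /comp /shift /=.
  by rewrite [h *: 1]/GRing.scale /= mulr1 scalerDl addrCA addrA.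
by split; rewrite /derivable /derive quotE //; exact: diff_derivable.
Qed.

(* Fermat's rule along each coordinate direction of y. *)
Lemma grad_y_eq0_at_min G x (y0 : 'rV[R]_n) : (forall p, differentiable G p) ->
  (forall y, G (x, y0) <= G (x, y)) -> grad_y G (x, y0) = 0.
Proof.
move=> dG y0_min; apply/rowP => j; rewrite !mxE.
have line t := is_derive_line (p := (x, y0)) (v := @ey_dir R m n j) (t := t) (dG _).
have := line 0; rewrite scale0r addr0 => -[_ <-].
suff [_ ->] : is_derive (0 : R) 1 (fun s => G ((x, y0) + s *: @ey_dir R m n j)) 0 by [].
apply: (@derive1_at_min _ _ (-1) 1) => [|t _||t _].
- lra.
- by case: (line t).
- by rewrite in_itv /= ltrN10 ltr01.
rewrite scale0r addr0 (_ : _ + _ = (x, y0 + t *: delta_mx 0 j)) //.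
by congr pair; rewrite /= scaler0 addr0.
Qed.

Definition strongly_convex_y G x mu := forall (a b : 'rV[R]_n) l, 0 <= l <= 1 ->
  G (x, (1 - l) *: a + l *: b) <=
    (1 - l) * G (x, a) + l * G (x, b) - mu / 2 * l * (1 - l) * enorm (a - b) ^+ 2.

Lemma strongly_convex_y_first_order G x a b mu :
  differentiable G (x, a) -> 0 <= mu -> strongly_convex_y G x mu ->
  dotv (grad_y G (x, a)) (b - a) <= G (x, b) - G (x, a) - mu / 2 * enorm (a - b) ^+ 2.
Proof.
move=> dG mu_ge0 scG.
have := derive_grad 0 (b - a) dG; rewrite (dotvC _ 0) dotv0l add0r => <-.
apply: lim_le_of_right; first exact: diff_derivable.
move=> e e_gt0; set N := mu / 2 * enorm (a - b) ^+ 2.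
have N_ge0 : 0 <= N by rewrite mulr_ge0 ?divr_ge0 ?sqr_ge0.
have N1_gt0 : 0 < N + 1 by rewrite ltr_wpDl.
near=> h.
have h_gt0 : 0 < h by near: h; exact: nbhs_right_gt.
have h_lt1 : h < 1 by near: h; exact: nbhs_right_lt.
have h_le : h <= e / (N + 1) by near: h; apply: nbhs_right_ltW; rewrite divr_gt0.
have hN_le : h * N <= e by move: h_le; rewrite ler_pdivlMr //; nra.
have := scG a b h; rewrite (ltW h_gt0) (ltW h_lt1) => /(_ isT) sc_h.
rewrite /comp /shift (_ : _ + _ = (x, (1 - h) *: a + h *: b)); last first.
  by congr pair; rewrite /= ?scaler0 ?add0r // scalerBr scalerBl scale1r addrC addrA addrAC.
rewrite -[X in X <= _]/(h^-1 * (_ - _)) mulrC ler_pdivrMr //.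
rewrite (_ : mu / 2 * h * (1 - h) * _ = h * (1 - h) * N) in sc_h; last first.
  by rewrite /N; ring.
nra.
Unshelve. all: by end_near.
Qed.

Lemma strongly_convex_y_grad_mono G x a b mu :
  differentiable G (x, a) -> differentiable G (x, b) -> 0 <= mu ->
  strongly_convex_y G x mu ->
  mu * enorm (a - b) ^+ 2 <= dotv (grad_y G (x, a) - grad_y G (x, b)) (a - b).
Proof.
move=> dGa dGb mu_ge0 scG.
have := strongly_convex_y_first_order b dGa mu_ge0 scG.
have := strongly_convex_y_first_order a dGb mu_ge0 scG.
have flip : dotv (grad_y G (x, a)) (a - b) = - dotv (grad_y G (x, a)) (b - a).
  by rewrite -dotvNr opprB.
rewrite (enormBC b a) dotvBl flip; lra.
Qed.


Lemma grad_y_sub_le G x (x' : 'rV[R]_m) a (w : 'rV[R]_n) K :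
  (forall p j, differentiable (fun q => derive G q (@ey_dir R m n j)) p) ->
  (forall c, 0 < c < 1 -> dotv ((x' - x) *m hess_xy G (x + c *: (x' - x), a)) w <= K) ->
  dotv (grad_y G (x', a) - grad_y G (x, a)) w <= K.
Proof.
move=> dDG hess_le; set u := x' - x.
have segE (s : R) : (x, a) + s *: (u, 0) = (x + s *: u, a) by congr pair; rewrite /= scaler0 addr0.
pose phi (s : R) := dotv (grad_y G ((x, a) + s *: (u, 0))) w.
have dphi (s : R) : is_derive s 1 phi (dotv (u *m hess_xy G ((x, a) + s *: (u, 0))) w).
  rewrite dotv_mulmx_hess_xy //.
  rewrite (_ : phi = \sum_(j < n)
      (w 0 j \*: (fun s : R => derive G ((x, a) + s *: (u, 0)) (@ey_dir R m n j)))).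
    by apply: is_derive_sum => j; apply: is_deriveZ; exact: is_derive_line.
  apply/funext => t; rewrite fct_sumE /phi /dotv.
  by apply: eq_bigr => j _; rewrite mxE mulrC.
have phi_cont : {within `[0, 1], continuous phi}.
  apply: continuous_subspaceT => s; apply: differentiable_continuous.
  by apply/derivable1_diffP; case: (dphi s).
have [c c01 phi_mvt] := MVT ltr01 (fun s _ => dphi s) phi_cont.
have phi1 : phi 1 = dotv (grad_y G (x', a)) w by rewrite /phi segE scale1r /u addrC subrK.
have phi0 : phi 0 = dotv (grad_y G (x, a)) w by rewrite /phi segE scale0r addr0.
rewrite dotvBl -phi1 -phi0 phi_mvt subr0 mulr1 segE.
by apply: hess_le; rewrite in_itv /= in c01.
Qed.

(* Strong monotonicity in y at x' and the mean value bound in x give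
   mu |y*(x) - y*(x')|^2 <= C |x - x'| |y*(x) - y*(x')|. *)
Lemma argmin_y_lipschitz G (X : set 'rV[R]_m) (ystar : 'rV[R]_m -> 'rV[R]_n) mu C x
    (x' : 'rV[R]_m) :
  (forall p, differentiable G p) ->
  (forall p j, differentiable (fun q => derive G q (@ey_dir R m n j)) p) ->
  convex_setv X -> 0 < mu -> 0 <= C ->
  (forall x, X x -> strongly_convex_y G x mu) ->
  (forall x y, X x -> G (x, ystar x) <= G (x, y)) ->
  (forall x a u w, X x -> dotv (u *m hess_xy G (x, a)) w <= C * enorm u * enorm w) ->
  X x -> X x' -> enorm (ystar x - ystar x') <= C / mu * enorm (x - x').
Proof.
move=> dG dDG X_conv mu_gt0 C_ge0 scG ystar_min hess_le Xx Xx'.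
set ys := ystar x; set zs := ystar x'; set N := enorm (ys - zs).
have grad0 z : X z -> grad_y G (z, ystar z) = 0.
  by move=> Xz; apply: grad_y_eq0_at_min => // y; exact: ystar_min.
have mono : mu * N ^+ 2 <= dotv (grad_y G (x', ys) - grad_y G (x, ys)) (ys - zs).
  have := strongly_convex_y_grad_mono (dG (x', ys)) (dG (x', zs)) (ltW mu_gt0) (scG _ Xx').
  by rewrite /zs grad0 // subr0 /ys grad0 // subr0.
have shift_le : dotv (grad_y G (x', ys) - grad_y G (x, ys)) (ys - zs) <=
    C * enorm (x' - x) * N.
  apply: grad_y_sub_le => // c /andP[c_gt0 c_lt1]; apply: hess_le.
  rewrite (_ : x + c *: (x' - x) = (1 - c) *: x + c *: x'); last first.
    by rewrite scalerBr scalerBl scale1r addrA addrAC.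
  by apply: X_conv; rewrite ?ltW.
have [N0|N_gt0] := eqVneq N 0.
  by rewrite N0 mulr_ge0 ?enorm_ge0 // divr_ge0 // ltW.
have {}N_gt0 : 0 < N by rewrite lt_def N_gt0 enorm_ge0.
rewrite enormBC mulrAC ler_pdivlMr // -(ler_pM2r N_gt0).
by have := le_trans mono shift_le; rewrite expr2 mulrA (mulrC mu).
Qed.

Lemma grad_y_step_contraction G x y y0 mu L t :
  (forall p, differentiable G p) -> 0 <= mu -> strongly_convex_y G x mu ->
  (forall y, G (x, y0) <= G (x, y)) ->
  (forall y1 y2, enorm (grad_y G (x, y1) - grad_y G (x, y2)) <= L * enorm (y1 - y2)) ->
  0 < t -> t * L ^+ 2 <= mu / 2 ->
  enorm (y - t *: grad_y G (x, y) - y0) ^+ 2 <= (1 - 3 * (t * mu / 2)) * enorm (y - y0) ^+ 2.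
Proof.
move=> dG mu_ge0 scG y0_min lip t_gt0 tL.
have grad0 := grad_y_eq0_at_min dG y0_min.
rewrite addrAC; apply: (enorm_grad_step_sqr_le (L := L)) => //.
  by have := strongly_convex_y_grad_mono (dG (x, y)) (dG (x, y0)) mu_ge0 scG; rewrite grad0 subr0.
by have := lip y y0; rewrite grad0 subr0.
Qed.

End PartialDerivatives.

Section ExpectedObjective.
Variables (R : realType) (m n : nat) (d : measure_display) (T : measurableType d).
Variables (P : probability T R) (gs : T -> 'rV[R]_m * 'rV[R]_n -> R).
Local Notation V := ('rV[R]_m * 'rV[R]_n)%type.
Local Notation G := (fun q : V => Ex P (fun x => gs x q)).

Hypothesis G_der1 : forall p v : V,
  differentiable G p /\ rintegrable P (fun x => derive (gs x) p v) /\
  derive G p v = Ex P (fun x => derive (gs x) p v).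

Hypothesis G_der2 : forall p v w : V,
  differentiable (fun q => derive G q v) p /\
  rintegrable P (fun x => derive (fun q => derive (gs x) q v) p w) /\
  derive (fun q => derive G q v) p w = Ex P (fun x => derive (fun q => derive (gs x) q v) p w).

Lemma hess_xy_form_le p (u : 'rV[R]_m) (w : 'rV[R]_n) C :
  (\int[P]_x (opnorm (hess_xy (gs x) p))%:E <= C%:E)%E ->
  dotv (u *m hess_xy G p) w <= C * enorm u * enorm w.
Proof.
apply: (dotv_mulmx_mean_le u w) => i j.
  by under eq_fun do rewrite mxE; exact: (G_der2 p (ey_dir j) (ex_dir i)).2.1.
rewrite mxE (G_der2 p (ey_dir j) (ex_dir i)).2.2.
by congr (Ex _ _); apply/funext => x; rewrite mxE.
Qed.

Lemma grad_y_sgd_step_le x y y0 z t s beta :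
  (\int[P]_xi (enorm (grad_y G (x, y) - grad_y (gs xi) (x, y)) ^+ 2)%:E <= s%:E)%E ->
  0 < beta < 1 ->
  (\int[P]_xi (enorm (y - t *: grad_y (gs xi) (x, y) - z) ^+ 2)%:E <=
    ((1 - beta)^-1 * (enorm (y - t *: grad_y G (x, y) - y0) ^+ 2 + t ^+ 2 * s)
     + beta^-1 * enorm (y0 - z) ^+ 2)%:E)%E.
Proof.
apply: integral_sgd_step_le => j.
  by under eq_fun do rewrite mxE; exact: (G_der1 (x, y) (ey_dir j)).2.1.
rewrite mxE (G_der1 (x, y) (ey_dir j)).2.2.
by congr (Ex _ _); apply/funext => xi; rewrite mxE.
Qed.

End ExpectedObjective.

Lemma sgd_bound_arith (R : realFieldType) (delta mu C eta D s r a dx dy : R) :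
  0 < delta -> 0 < mu -> 3 * mu * delta <= 2 -> 0 <= C -> 0 <= r -> 0 <= s ->
  a <= (1 - 3 * (delta * mu / 2)) * r ->
  0 <= dy -> dy <= C / mu * dx -> dx <= eta * D ->
  (1 - delta * mu / 2)^-1 * (a + delta ^+ 2 * s) + (delta * mu / 2)^-1 * dy ^+ 2 <=
    (1 - delta * mu / 2) * r + 2 * eta ^+ 2 / (delta * mu) * (C / mu) ^+ 2 * D ^+ 2
    + 4 * delta ^+ 2 * s.
Proof.
move=> delta_gt0 mu_gt0 delta_le C_ge0 r_ge0 s_ge0 a_le dy_ge0 dy_le dx_le.
set beta := delta * mu / 2 in a_le *.
have beta_gt0 : 0 < beta by rewrite divr_gt0 ?mulr_gt0.
have beta_le : beta <= 1 / 3 by rewrite /beta; lra.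
have contr : (1 - beta)^-1 * (a + delta ^+ 2 * s) <= (1 - beta) * r + 4 * (delta ^+ 2 * s).
  have v_ge0 := mulr_ge0 (sqr_ge0 delta) s_ge0.
  have beta_le' : 0 <= 1 / 3 - beta by rewrite subr_ge0.
  have := mulr_ge0 v_ge0 beta_le'; have := mulr_ge0 (ltW beta_gt0) r_ge0.
  have := mulr_ge0 (mulr_ge0 (ltW beta_gt0) (ltW beta_gt0)) r_ge0.
  move=> ? ? ?; rewrite [X in X <= _]mulrC ler_pdivrMr; [nra | lra].
have dy_le' : dy <= C / mu * (eta * D).
  by rewrite (le_trans dy_le) // ler_wpM2l // divr_ge0 // ltW.
have dy2_le : dy ^+ 2 <= (C / mu * (eta * D)) ^+ 2.
  by rewrite lerXn2r ?nnegrE // (le_trans dy_ge0).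
have beta_inv_ge0 : 0 <= beta^-1 by rewrite invr_ge0 ltW.
have := ler_wpM2l beta_inv_ge0 dy2_le.
rewrite (_ : beta^-1 * (C / mu * (eta * D)) ^+ 2 =
    2 * eta ^+ 2 / (delta * mu) * (C / mu) ^+ 2 * D ^+ 2); first lra.
by rewrite /beta; field; rewrite ?gt_eqF ?mulr_gt0.
Qed.

Unset Implicit Arguments. Set Strict Implicit.

Theorem lemma1 (R : realType) (m n : nat)
  (X : set 'rV[R]_m) (D : R)
  (dth dxi : measure_display) (Tth : measurableType dth) (Txi : measurableType dxi)
  (Pth : probability Tth R) (Pxi : probability Txi R)
  (f : 'rV[R]_m -> 'rV[R]_n -> Tth -> R) (g : 'rV[R]_m -> 'rV[R]_n -> Txi -> R)
  (sigx sigy sigxy sigg Lfx Lfy Lg Lgxy Lgyy Cy Cxy mug : R)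
  (ystar : 'rV[R]_m -> 'rV[R]_n)
  (hXne : X !=set0) (hXconv : convex_setv X) (hXcomp : compact X)
  (hD : is_diameter X D)
  (hf_int : forall x y, Pth.-integrable setT (fun th => (f x y th)%:E))
  (hg_int : forall x y, Pxi.-integrable setT (fun xi => (g x y xi)%:E))
  (hf_diff : forall th p, differentiable (fun q : 'rV[R]_m * 'rV[R]_n => f q.1 q.2 th) p)
  (hg_C2 : forall xi, C2 (fun q : 'rV[R]_m * 'rV[R]_n => g q.1 q.2 xi))
  (hF_der : forall p v,
     differentiable (fun q : 'rV[R]_m * 'rV[R]_n => Ex Pth (f q.1 q.2)) p /\
     Pth.-integrable setT
       (fun th => (derive (fun q : 'rV[R]_m * 'rV[R]_n => f q.1 q.2 th) p v)%:E) /\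
     derive (fun q : 'rV[R]_m * 'rV[R]_n => Ex Pth (f q.1 q.2)) p v =
       Ex Pth (fun th => derive (fun q : 'rV[R]_m * 'rV[R]_n => f q.1 q.2 th) p v))
  (hG_der1 : forall p v,
     differentiable (fun q : 'rV[R]_m * 'rV[R]_n => Ex Pxi (g q.1 q.2)) p /\
     Pxi.-integrable setT
       (fun xi => (derive (fun q : 'rV[R]_m * 'rV[R]_n => g q.1 q.2 xi) p v)%:E) /\
     derive (fun q : 'rV[R]_m * 'rV[R]_n => Ex Pxi (g q.1 q.2)) p v =
       Ex Pxi (fun xi => derive (fun q : 'rV[R]_m * 'rV[R]_n => g q.1 q.2 xi) p v))
  (hG_der2 : forall p v w,
     differentiable (fun q' => derive (fun q : 'rV[R]_m * 'rV[R]_n => Ex Pxi (g q.1 q.2)) q' v) p /\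
     Pxi.-integrable setT
       (fun xi => (derive (fun q' => derive (fun q : 'rV[R]_m * 'rV[R]_n => g q.1 q.2 xi) q' v) p w)%:E) /\
     derive (fun q' => derive (fun q : 'rV[R]_m * 'rV[R]_n => Ex Pxi (g q.1 q.2)) q' v) p w =
       Ex Pxi (fun xi => derive (fun q' => derive (fun q : 'rV[R]_m * 'rV[R]_n => g q.1 q.2 xi) q' v) p w))
  (hA1x : forall x y,
     (\int[Pth]_th ((enorm (grad_x (fun q => Ex Pth (f q.1 q.2)) (x, y)
                            - grad_x (fun q => f q.1 q.2 th) (x, y))) ^+ 2)%:E
      <= (sigx ^+ 2)%:E)%E)
  (hA1y : forall x y,
     (\int[Pth]_th ((enorm (grad_y (fun q => Ex Pth (f q.1 q.2)) (x, y)
                            - grad_y (fun q => f q.1 q.2 th) (x, y))) ^+ 2)%:E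
      <= (sigy ^+ 2)%:E)%E)
  (hA1xy : forall x y,
     (\int[Pxi]_xi ((opnorm (hess_xy (fun q => Ex Pxi (g q.1 q.2)) (x, y)
                             - hess_xy (fun q => g q.1 q.2 xi) (x, y))) ^+ 2)%:E
      <= (sigxy ^+ 2)%:E)%E)
  (hA1g : forall x y,
     (\int[Pxi]_xi ((enorm (grad_y (fun q => Ex Pxi (g q.1 q.2)) (x, y)
                            - grad_y (fun q => g q.1 q.2 xi) (x, y))) ^+ 2)%:E
      <= (sigg ^+ 2)%:E)%E)
  (hA2fx : forall x y1 y2, X x ->
     enorm (grad_x (fun q => Ex Pth (f q.1 q.2)) (x, y1)
            - grad_x (fun q => Ex Pth (f q.1 q.2)) (x, y2)) <= Lfx * enorm (y1 - y2))
  (hA2fy : forall x y1 y2, X x ->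
     enorm (grad_y (fun q => Ex Pth (f q.1 q.2)) (x, y1)
            - grad_y (fun q => Ex Pth (f q.1 q.2)) (x, y2)) <= Lfy * enorm (y1 - y2))
  (hA2g : forall x y1 y2, X x ->
     enorm (grad_y (fun q => Ex Pxi (g q.1 q.2)) (x, y1)
            - grad_y (fun q => Ex Pxi (g q.1 q.2)) (x, y2)) <= Lg * enorm (y1 - y2))
  (hA2gxy : forall x y1 y2, X x ->
     opnorm (hess_xy (fun q => Ex Pxi (g q.1 q.2)) (x, y1)
             - hess_xy (fun q => Ex Pxi (g q.1 q.2)) (x, y2)) <= Lgxy * enorm (y1 - y2))
  (hA2gyy : forall x y1 y2, X x ->
     opnorm (hess_yy (fun q => Ex Pxi (g q.1 q.2)) (x, y1)
             - hess_yy (fun q => Ex Pxi (g q.1 q.2)) (x, y2)) <= Lgyy * enorm (y1 - y2))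
  (hA3fy : forall y x1 x2,
     enorm (grad_y (fun q => Ex Pth (f q.1 q.2)) (x1, y)
            - grad_y (fun q => Ex Pth (f q.1 q.2)) (x2, y)) <= Lfy * enorm (x1 - x2))
  (hA3gxy : forall y x1 x2,
     opnorm (hess_xy (fun q => Ex Pxi (g q.1 q.2)) (x1, y)
             - hess_xy (fun q => Ex Pxi (g q.1 q.2)) (x2, y)) <= Lgxy * enorm (x1 - x2))
  (hA3gyy : forall y x1 x2,
     opnorm (hess_yy (fun q => Ex Pxi (g q.1 q.2)) (x1, y)
             - hess_yy (fun q => Ex Pxi (g q.1 q.2)) (x2, y)) <= Lgyy * enorm (x1 - x2))
  (hA4y : forall x y, X x ->
     (\int[Pth]_th (enorm (grad_y (fun q => f q.1 q.2 th) (x, y)))%:E <= Cy%:E)%E)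
  (hA4xy : forall x y, X x ->
     (\int[Pxi]_xi (opnorm (hess_xy (fun q => g q.1 q.2 xi) (x, y)))%:E <= Cxy%:E)%E)
  (hmug : 0 < mug)
  (hA5 : forall x a b (l : R), X x -> 0 <= l <= 1 ->
     Ex Pxi (g x ((1 - l) *: a + l *: b))
       <= (1 - l) * Ex Pxi (g x a) + l * Ex Pxi (g x b)
          - mug / 2 * l * (1 - l) * enorm (a - b) ^+ 2)
  (hystar : forall x y, X x -> Ex Pxi (g x (ystar x)) <= Ex Pxi (g x y))
  (xp : 'rV[R]_m) (yp : 'rV[R]_n) (dp sp : 'rV[R]_m) (eta delta : R)
  (hxp : X xp)
  (hsp : X sp /\ forall s, X s -> dotv sp dp <= dotv s dp)
  (heta : 0 <= eta <= 1)
  (hdelta0 : 0 < delta)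
  (hdelta1 : 3 * mug * delta <= 2)
  (hdelta2 : 2 * (1 + sigg ^+ 2) * Lg ^+ 2 * delta <= mug) :
  let xt := (1 - eta) *: xp + eta *: sp in
  (\int[Pxi]_xi
     ((enorm (yp - delta *: grad_y (fun q => g q.1 q.2 xi) (xp, yp) - ystar xt)) ^+ 2)%:E
   <= ((1 - delta * mug / 2) * enorm (yp - ystar xp) ^+ 2
       + 2 * eta ^+ 2 / (delta * mug) * (Cxy / mug) ^+ 2 * D ^+ 2
       + 4 * delta ^+ 2 * sigg ^+ 2)%:E)%E.
Proof.
cbv zeta; set xt := (1 - eta) *: xp + eta *: sp.
pose G q := Ex Pxi (g q.1 q.2); pose gs xi q := g q.1 q.2 xi.
have Xxt : X xt by apply: hXconv => //; exact: hsp.1.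
have dG p : differentiable G p by case: (hG_der1 p 0).
have dDG p j : differentiable (fun q => derive G q (@ey_dir R m n j)) p.
  by case: (hG_der2 p (ey_dir j) 0).
have scG x : X x -> strongly_convex_y G x mug by move=> Xx a b l; exact: hA5.
have Cxy_ge0 : 0 <= Cxy.
  rewrite -lee_fin (le_trans _ (hA4xy xp yp hxp)) // integral_ge0 // => xi _.
  by rewrite lee_fin opnorm_ge0.
have ystar_lip := argmin_y_lipschitz dG dDG hXconv hmug Cxy_ge0 scG hystar
  (fun x a u w Xx => hess_xy_form_le (gs := gs) hG_der2 u w (hA4xy x a Xx)) hxp Xxt.
have dx_le : enorm (xp - xt) <= eta * D.
  rewrite enormBC (_ : xt - xp = eta *: (sp - xp)); last by apply/rowP => i; rewrite !mxE; ring.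
  by rewrite enormZ ger0_norm ?(andP heta).1 // ler_wpM2l ?(andP heta).1 // (hD.1 _ _ hsp.1 hxp).
have contr := grad_y_step_contraction yp dG (ltW hmug) (scG _ hxp)
  (fun y => hystar xp y hxp) (fun y1 y2 => hA2g xp y1 y2 hxp) hdelta0.
have beta01 : 0 < delta * mug / 2 < 1 by apply/andP; split; nra.
apply: le_trans (grad_y_sgd_step_le (gs := gs) hG_der1 (ystar xp) (ystar xt) delta
  (hA1g xp yp) beta01) _.
rewrite lee_fin; apply: sgd_bound_arith (sqr_ge0 _) (sqr_ge0 _) (contr _) (enorm_ge0 _)
  ystar_lip dx_le => //.
by have := mulr_ge0 (mulr_ge0 (sqr_ge0 sigg) (sqr_ge0 Lg)) (ltW hdelta0); nra.
Qed.
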